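(* Let $H$ be a connected pointed block graph, let $Q$ be a near-leaf block of $H$, and let $v$ be the anchor of $Q$ if it exists and otherwise any cut-vertex of $Q$. Let $x\neq v$ be a cut-vertex of $Q$ and let $L$ be a leaf block of $H$ that is a neighbour of $Q$ and contains $x$. Then every maximal co-interval subgraph $K$ of $H$ with $E(L)\subseteq E(K)$ satisfies $E(K)=E(Q_{x,y})$ for some $y\in V(Q)$.
   Context: All graphs are finite and simple. A block is a maximal connected subgraph with no cut-vertex of its own; a block graph is one whose blocks are all complete. A cut-vertex is a vertex whose removal increases the number of connected components. A block is a leaf block if it contains exactly one cut-vertex, an internal block if it contains at least two, and an edge block if it has exactly two vertices; two distinct blocks are neighbours if they share a vertex. A graph is pointed if all its leaf blocks are edge blocks. An internal block $Q$ is a near-leaf block if either all neighbours of $Q$ are leaf blocks, or all internal block neighbours of $Q$ share with $Q$ one and the same cut-vertex, called the anchor of $Q$. For a clique $Q$ and $x,y\in V(Q)$, the big ant is $Q_{x,y}=\big(V(Q)\cup N_H(x)\cup N_H(y),\ E(Q)\cup\delta_H(x)\cup\delta_H(y)\big)$. A graph is co-interval if its vertices can be assigned closed real intervals such that two vertices are adjacent iff their intervals are disjoint. A co-interval subgraph $K$ of $H$ is maximal if no co-interval subgraph $K'$ of $H$ has $E(K)\subsetneq E(K')$. *)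

From Stdlib Require Import Reals.
From mathcomp Require Import all_boot.
Set Implicit Arguments. Unset Strict Implicit. Unset Printing Implicit Defensive.

Section Graphs.
Variable T : finType.

(* A graph/subgraph is a pair (vertex set, edge set); edges are 2-element sets. *)
Definition sgraph := ({set T} * {set {set T}})%type.

Definition EH (e : rel T) : {set {set T}} :=
  [set f : {set T} | [exists x, exists y, e x y && (f == [set x; y])]].

Definition is_subgraph (e : rel T) (G : sgraph) : bool :=
  (G.2 \subset EH e) && [forall f in G.2, f \subset G.1].

Definition adjF (F : {set {set T}}) : rel T :=
  [rel x y | (x != y) && ([set x; y] \in F)].

Definition conn (S : {set T}) (F : {set {set T}}) : rel T :=
  connect [rel x y | [&& x \in S, y \in S & adjF F x y]].

Definition ncomp (S : {set T}) (F : {set {set T}}) : nat :=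
  #|[set [set y in S | conn S F x y] | x in S]|.

Definition gconnected (G : sgraph) : bool := ncomp G.1 G.2 == 1.

Definition is_cut (G : sgraph) (v : T) : bool :=
  (v \in G.1) && (ncomp G.1 G.2 < ncomp (G.1 :\ v) G.2).

Definition no_cut (G : sgraph) : bool := [forall v, ~~ is_cut G v].

Definition sub_le (G G' : sgraph) : bool := (G.1 \subset G'.1) && (G.2 \subset G'.2).

Definition Hgraph (e : rel T) : sgraph := ([set: T], EH e).

Definition cutH (e : rel T) (v : T) : bool := is_cut (Hgraph e) v.

Definition is_block (e : rel T) (B : sgraph) : Prop :=
  [&& is_subgraph e B, gconnected B & no_cut B] /\
  forall B' : sgraph, [&& is_subgraph e B', gconnected B' & no_cut B'] ->
    sub_le B B' -> B' = B.

Definition complete (B : sgraph) : bool :=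
  [forall x in B.1, forall y in B.1, (x != y) ==> ([set x; y] \in B.2)].

Definition block_graph (e : rel T) : Prop :=
  forall B, is_block e B -> complete B.

Definition ncutin (e : rel T) (B : sgraph) : nat := #|[set v in B.1 | cutH e v]|.

Definition leaf_block (e : rel T) (B : sgraph) : Prop := is_block e B /\ ncutin e B = 1.
Definition internal_block (e : rel T) (B : sgraph) : Prop := is_block e B /\ 2 <= ncutin e B.
Definition edge_block (e : rel T) (B : sgraph) : Prop := is_block e B /\ #|B.1| = 2.

Definition neighbours (e : rel T) (B B' : sgraph) : Prop :=
  [/\ is_block e B, is_block e B', B <> B' & ~~ [disjoint B.1 & B'.1]].

Definition pointed (e : rel T) : Prop :=
  forall B, leaf_block e B -> edge_block e B.

Definition shares_common_cut (e : rel T) (Q : sgraph) (a : T) : Prop :=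
  [/\ a \in Q.1, cutH e a &
     forall B, internal_block e B -> neighbours e Q B -> B.1 :&: Q.1 = [set a]].

Definition near_leaf (e : rel T) (Q : sgraph) : Prop :=
  internal_block e Q /\
  ((forall B, neighbours e Q B -> leaf_block e B) \/
   exists a, shares_common_cut e Q a).

(* the anchor exists only when Q has an internal neighbour *)
Definition is_anchor (e : rel T) (Q : sgraph) (a : T) : Prop :=
  (exists B, internal_block e B /\ neighbours e Q B) /\ shares_common_cut e Q a.

Definition delta (e : rel T) (x : T) : {set {set T}} := [set f in EH e | x \in f].

Definition big_ant_edges (e : rel T) (Q : sgraph) (x y : T) : {set {set T}} :=
  Q.2 :|: delta e x :|: delta e y.

Definition co_interval (G : sgraph) : Prop :=
  exists l r : T -> R,
    (forall v, v \in G.1 -> Rle (l v) (r v)) /\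
    (forall u v, u \in G.1 -> v \in G.1 -> u != v ->
       ([set u; v] \in G.2 <-> (Rlt (r u) (l v) \/ Rlt (r v) (l u)))).

Definition co_interval_subgraph (e : rel T) (K : sgraph) : Prop :=
  is_subgraph e K /\ co_interval K.

Definition maximal_co_interval (e : rel T) (K : sgraph) : Prop :=
  co_interval_subgraph e K /\
  ~ (exists K', co_interval_subgraph e K' /\ K.2 \proper K'.2).

End Graphs.

(* Write L = {x, z}. As x is not the anchor of the near-leaf block Q, every other
   block through x is a leaf, hence an edge whose far end is not a cut vertex; so z,
   and every neighbour of x outside Q, is adjacent to x only.  No vertex outside the
   clique Q has two neighbours in Q.  In an interval representation of K the
   interval of z misses that of x and meets all others.  Co-interval graphs have no
   induced 2K2, so every edge of K avoiding x has an end in Q, and an ordering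
   argument on intervals shows that at most one vertex y <> x of Q has K-edges
   leaving Q.  Hence E(K) is contained in E(Q_{x,y}); the big ant Q_{x,y} is itself
   co-interval, so maximality of K gives equality. *)

From Stdlib Require Import Reals Lra.
From mathcomp Require Import all_boot.

Set Implicit Arguments. Unset Strict Implicit. Unset Printing Implicit Defensive.

Definition ivdisj (I J : R * R) : Prop := Rlt I.2 J.1 \/ Rlt J.2 I.1.

Lemma ivdisj_no_induced_2K2 X Z A B :
  ivdisj X Z -> ivdisj A B ->
  ~ ivdisj X A -> ~ ivdisj X B -> ~ ivdisj Z A -> ~ ivdisj Z B -> False.
Proof. rewrite /ivdisj; intuition lra. Qed.

(* Each Ci meets X and Z, so it covers the gap between them and Qi, which meets Z
   but misses Ci, lies beyond Ci; the crossings Q1-C2 and Q2-C1 then order the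
   left ends of Q1 and Q2 both ways. *)
Lemma ivdisj_crossed_pairs X Z Q1 C1 Q2 C2 :
  ivdisj X Z -> ivdisj Q1 C1 -> ivdisj Q2 C2 ->
  ~ ivdisj X C1 -> ~ ivdisj X C2 -> ~ ivdisj Z C1 -> ~ ivdisj Z C2 ->
  ~ ivdisj Z Q1 -> ~ ivdisj Z Q2 -> ~ ivdisj Q1 C2 -> ~ ivdisj Q2 C1 -> False.
Proof. rewrite /ivdisj; intuition lra. Qed.

Section Connectivity.
Variable T : finType.
Implicit Types (S D : {set T}) (F : {set {set T}}) (G : sgraph T).

Definition crel S F : rel T := [rel a b | [&& a \in S, b \in S & adjF F a b]].

Lemma crel_sym S F : symmetric (crel S F).
Proof. by move=> a b; rewrite /crel /= /adjF /= eq_sym setUC andbCA andbA. Qed.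

Lemma conn_sym S F a b : conn S F a b = conn S F b a.
Proof. exact: (sym_connect_sym (crel_sym S F)). Qed.

Lemma conn_trans S F b a c : conn S F a b -> conn S F b c -> conn S F a c.
Proof. exact: connect_trans. Qed.

Lemma conn_edge S F a b : a \in S -> b \in S -> a != b -> [set a; b] \in F ->
  conn S F a b.
Proof. by move=> aS bS ab abF; apply: connect1; rewrite /= aS bS /adjF /= ab. Qed.

Lemma ncomp_le1P S F : reflect {in S &, forall a b, conn S F a b} (ncomp S F <= 1).
Proof.
apply: (iffP card_le1_eqP) => [Hcomp a b aS bS | Hconn].
  have := Hcomp _ _ (imset_f (fun c => [set d in S | conn S F c d]) aS)
                    (imset_f (fun c => [set d in S | conn S F c d]) bS).
  by move/setP/(_ b); rewrite !inE bS /= [conn _ _ b b]connect0 => <-.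
move=> _ _ /imsetP[a aS ->] /imsetP[b bS ->]; apply/setP => c; rewrite !inE.
case: (c \in S) => //=; apply/idP/idP; apply: conn_trans; exact: Hconn.
Qed.

Lemma hub_conn S F h : h \in S -> {in S, forall a, conn S F h a} ->
  {in S &, forall a b, conn S F a b}.
Proof. by move=> hS Hh a b aS bS; apply: (conn_trans _ (Hh b bS)); rewrite conn_sym Hh. Qed.

Lemma gconnectedI G a : a \in G.1 -> {in G.1 &, forall b c, conn G.1 G.2 b c} ->
  gconnected G.
Proof.
move=> aG /ncomp_le1P Hle; rewrite /gconnected eqn_leq Hle card_gt0.
by apply/set0Pn; exists [set b in G.1 | conn G.1 G.2 a b]; apply: imset_f.
Qed.

Lemma no_cutI G : gconnected G ->
  (forall w, w \in G.1 -> {in G.1 :\ w &, forall a b, conn (G.1 :\ w) G.2 a b}) ->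
  no_cut G.
Proof.
move=> Gconn Hdel; apply/forallP => w; rewrite /is_cut negb_and.
case wG: (w \in G.1) => //=; rewrite -leqNgt (eqP Gconn); exact/ncomp_le1P/Hdel.
Qed.

Lemma path_crel_sub S F a p : path (crel S F) a p -> {subset p <= S}.
Proof.
elim: p a => [|b p IHp] a //= /andP[/and3P[_ bS _] /IHp pS] c.
by rewrite inE => /predU1P[->|/pS].
Qed.

End Connectivity.

Section Blocks.
Variables (T : finType) (e : rel T).
Hypotheses (e_sym : symmetric e) (e_irr : irreflexive e).
Implicit Types (D S : {set T}) (G B : sgraph T).

Lemma adj_neq a b : e a b -> a != b.
Proof. by apply: contraTneq => ->; rewrite e_irr. Qed.

Lemma EHP f : reflect (exists a b, e a b /\ f = [set a; b]) (f \in EH e).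
Proof.
rewrite inE; apply: (iffP existsP) => [[a /existsP[b /andP[eab /eqP->]]]|[a [b [eab ->]]]].
  by exists a, b.
by exists a; apply/existsP; exists b; rewrite eab eqxx.
Qed.

Lemma EH_edge a b : ([set a; b] \in EH e) = e a b.
Proof.
apply/EHP/idP => [[c [d [ecd Eab]]] | eab]; last by exists a, b.
have /eqP : #|[set a; b]| == #|[set c; d]| by rewrite Eab.
rewrite !cards2 (adj_neq ecd) => -[ab].
have /set2P[aE|aE] : a \in [set c; d] by rewrite -Eab set21.
all: have /set2P[bE|bE] : b \in [set c; d] by rewrite -Eab set22.
all: by subst a b; rewrite ?eqxx in ab; rewrite // e_sym.
Qed.

Lemma subgraph_edge_adj G a b : is_subgraph e G -> [set a; b] \in G.2 -> e a b.
Proof. by case/andP => /subsetP GE _ /GE; rewrite EH_edge. Qed.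

Lemma subgraph_edge_vertices G a b : is_subgraph e G -> [set a; b] \in G.2 ->
  (a \in G.1) && (b \in G.1).
Proof. by case/andP => _ /forall_inP GV /GV/subsetP sG; rewrite !sG ?set21 ?set22. Qed.

Lemma complete_edge G a b : complete G -> a \in G.1 -> b \in G.1 -> a != b ->
  [set a; b] \in G.2.
Proof.
move=> /forall_inP/(_ a) Gc aG bG ab.
by move/forall_inP/(_ b bG)/implyP: (Gc aG); apply.
Qed.

Definition nonseparable G := [&& is_subgraph e G, gconnected G & no_cut G].

Lemma nonseparable_sub_block G : nonseparable G -> exists2 B, is_block e B & sub_le G B.
Proof.
move=> GnS; pose P B := nonseparable B && sub_le G B.
have PG : P G by rewrite /P GnS /sub_le !subxx.
case: (arg_maxnP (fun B : sgraph T => #|B.1| + #|B.2|) PG) => B /andP[BnS GB] Bmax.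
exists B => //; split => // B' B'nS /andP[s1 s2].
have /Bmax le_B'B : P B'.
  case/andP: GB => t1 t2; apply/andP; split => //.
  by rewrite /sub_le (subset_trans t1 s1) (subset_trans t2 s2).
apply: injective_projections; apply/eqP; rewrite eq_sym eqEcard ?s1 ?s2 /=.
  by rewrite -(leq_add2r #|B.2|); apply: leq_trans le_B'B; rewrite leq_add2l subset_leq_card.
by rewrite -(leq_add2l #|B.1|); apply: leq_trans le_B'B; rewrite leq_add2r subset_leq_card.
Qed.

Definition induced D : sgraph T := (D, [set f in EH e | f \subset D]).

Lemma induced_subgraph D : is_subgraph e (induced D).
Proof.
apply/andP; split; first by apply/subsetP => f; rewrite inE => /andP[].
by apply/forall_inP => f; rewrite inE => /andP[].
Qed.

Lemma induced_edge D a b : a \in D -> b \in D -> e a b -> [set a; b] \in (induced D).2.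
Proof. by move=> aD bD eab; rewrite inE EH_edge eab; apply/subsetP => c /set2P[]->. Qed.

Lemma sub_le_induced G D : is_subgraph e G -> G.1 \subset D -> sub_le G (induced D).
Proof.
case/andP=> GE GV GD; rewrite /sub_le GD; apply/subsetP => f fG.
by rewrite inE (subsetP GE _ fG) (subset_trans (implyP (forallP GV f) fG) GD).
Qed.

Lemma block_induced B D : is_block e B -> B.1 \subset D -> nonseparable (induced D) ->
  D = B.1.
Proof.
by case=> /and3P[Bsub _ _] Bmax BD DnS; rewrite -(Bmax _ DnS (sub_le_induced Bsub BD)).
Qed.

Lemma nonseparable_inducedI D a : a \in D ->
  {in D &, forall b c, conn D (induced D).2 b c} ->
  (forall w, w \in D -> {in D :\ w &, forall b c, conn (D :\ w) (induced D).2 b c}) ->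
  nonseparable (induced D).
Proof.
move=> aD Dconn Dwconn.
have DC : gconnected (induced D) := gconnectedI (G := induced D) aD Dconn.
by rewrite /nonseparable induced_subgraph DC; apply: no_cutI.
Qed.

Lemma induced_conn_adj D S a b : S \subset D -> a \in S -> b \in S -> e a b ->
  conn S (induced D).2 a b.
Proof.
move=> SD aS bS eab; apply: conn_edge (adj_neq eab) _ => //.
by apply: induced_edge; rewrite ?(subsetP SD).
Qed.

Lemma induced_two_hubs_nonseparable D h1 h2 : h1 \in D -> h2 \in D -> h1 != h2 ->
  {in D, forall a, a != h1 -> e h1 a} -> {in D, forall a, a != h2 -> e h2 a} ->
  nonseparable (induced D).
Proof.
move=> h1D h2D h12 hub1 hub2.
have hub_conn_in S h : S \subset D -> h \in S -> {in D, forall a, a != h -> e h a} ->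
    {in S &, forall a b, conn S (induced D).2 a b}.
  move=> SD hS hub; apply: (hub_conn hS) => a aS.
  have [->|ah] := eqVneq a h; first exact: connect0.
  by apply: induced_conn_adj; rewrite ?hub ?(subsetP SD).
apply: (nonseparable_inducedI h1D); first exact: hub_conn_in (subxx D) h1D hub1.
move=> w wD; have [->|wh1] := eqVneq w h1.
  by apply: (hub_conn_in _ h2) hub2 => //; rewrite ?subsetDl // !inE eq_sym h12.
by apply: (hub_conn_in _ h1) hub1 => //; rewrite ?subsetDl // !inE eq_sym wh1.
Qed.

Lemma edge_nonseparable a b : e a b -> nonseparable (induced [set a; b]).
Proof.
move=> eab; apply: (induced_two_hubs_nonseparable (set21 a b) (set22 a b) (adj_neq eab)).
  by move=> c /set2P[]->; rewrite ?eqxx.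
by move=> c /set2P[]->; rewrite ?eqxx // e_sym.
Qed.

Lemma sorted_conn D S s : S \subset D -> sorted e s -> {subset s <= S} ->
  {in s &, forall a b, conn S (induced D).2 a b}.
Proof.
case: s => [//|h t] SD /= ht hS.
have /path_connect hconn : path (crel S (induced D).2) h t.
  apply: (@sub_in_path _ (fun a => a \in S)) ht; last by apply/allP => a /hS.
  move=> a b aS bS eab; rewrite /crel /= aS bS /adjF /= adj_neq //.
  by apply: induced_edge; rewrite ?(subsetP SD).
by move=> a b /hconn ha /hconn hb; apply: conn_trans hb; rewrite conn_sym.
Qed.

Lemma sorted_conn_end D S u t : S \subset D -> u \in S -> sorted e t -> {subset t <= S} ->
  e u (head u t) \/ e u (last u t) -> {in t, forall a, conn S (induced D).2 u a}.
Proof.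
case: t => [//|h t] SD uS t_sorted tS ends a a_t.
have tconn := sorted_conn SD t_sorted tS.
case: ends => [uh|ul].
  exact: conn_trans (induced_conn_adj SD uS (tS h (mem_head _ _)) uh)
                    (tconn _ _ (mem_head _ _) a_t).
exact: conn_trans (induced_conn_adj SD uS (tS _ (mem_last _ _)) ul)
                  (tconn _ _ (mem_last _ _) a_t).
Qed.

Lemma induced_cycle_nonseparable u s : uniq s -> sorted e s -> u \notin s ->
  e u (head u s) -> e u (last u s) -> nonseparable (induced (u |: [set a in s])).
Proof.
set D := u |: _ => s_uniq s_sorted us u_head u_last.
have uD : u \in D := setU11 _ _.
have sD : {subset s <= D} by move=> a a_s; rewrite !inE a_s orbT.
apply: (nonseparable_inducedI uD).
  apply: (hub_conn uD) => a; rewrite !inE => /predU1P[->|a_s]; first exact: connect0.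
  by apply: (sorted_conn_end _ _ s_sorted) => //; left.
move=> w wD; have [->|wu] := eqVneq w u.
  have Du_s a : a \in D :\ u -> a \in s by rewrite !inE => /andP[/negbTE->].
  move=> a b /Du_s a_s /Du_s b_s.
  apply: (sorted_conn (subsetDl _ _) s_sorted) => // c c_s.
  by rewrite !inE c_s orbT andbT; apply: contraNneq us => <-.
have w_s : w \in s by move: wD; rewrite !inE (negbTE wu).
have [s1 [s2 Es]] : exists s1 s2, s = s1 ++ w :: s2.
  exists (take (index w s) s), (drop (index w s).+1 s).
  by rewrite -[X in X :: _](nth_index w w_s) -drop_nth ?index_mem // cat_take_drop.
have uDw : u \in D :\ w by rewrite !inE eqxx andbT eq_sym.
have sub_Dw t : w \notin t -> {subset t <= s} -> {subset t <= D :\ w}.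
  by move=> wt ts a a_t; rewrite in_setD1 sD ?ts // andbT; apply: contraNneq wt => <-.
move: s_uniq s_sorted; rewrite Es cat_uniq /= => /and4P[_ /norP[ws1 _] ws2 _].
case/cat_sorted2 => s1_sorted /path_sorted s2_sorted.
apply: (hub_conn uDw) => a; rewrite !inE => /andP[aw /predU1P[->|]]; first exact: connect0.
rewrite Es mem_cat inE (negbTE aw) /= => /orP[a_s1|a_s2].
  apply: (sorted_conn_end (subsetDl _ _) _ s1_sorted) => //.
    by apply: sub_Dw => // c c_s1; rewrite Es mem_cat c_s1.
  by left; case: s1 Es a_s1 {ws1 s1_sorted} => //= h t Es _; rewrite Es in u_head.
apply: (sorted_conn_end (subsetDl _ _) _ s2_sorted) => //.
  by apply: sub_Dw => // c c_s2; rewrite Es mem_cat inE c_s2 !orbT.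
by right; case: s2 Es a_s2 {ws2 s2_sorted} => //= h t Es _; rewrite Es last_cat in u_last.
Qed.

Lemma edge_block_pendant B x u w : gconnected (Hgraph e) -> is_block e B ->
  B.1 = [set x; u] -> e u x -> ~~ cutH e u -> e u w -> w = x.
Proof.
move=> Hconn BB B1 eux ucut euw; apply/eqP; apply: contraT => wx.
have xu : x != u by rewrite eq_sym adj_neq.
have wu : w != u by rewrite eq_sym adj_neq.
have Hu_conn : conn ([set: T] :\ u) (EH e) x w.
  move: ucut; rewrite /cutH /is_cut /= in_setT -leqNgt (eqP Hconn) => /ncomp_le1P.
  by apply; rewrite !inE ?xu ?wu.
case/connectP: Hu_conn => p /shortenP[p' p'path p'uniq _ wE].
have s_sorted : sorted e (x :: p').
  by apply: sub_path p'path => a b /and3P[_ _ /andP[_]]; rewrite EH_edge.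
have us : u \notin x :: p'.
  rewrite inE negb_or eq_sym xu /=.
  by apply/negP => /(path_crel_sub p'path); rewrite !inE eqxx.
have ulast : e u (last u (x :: p')) by rewrite /= -wE.
have CnS := induced_cycle_nonseparable p'uniq s_sorted us eux ulast.
have BC : B.1 \subset u |: [set a in x :: p'].
  by rewrite B1; apply/subsetP => a /set2P[]->; rewrite !inE eqxx ?orbT.
move/setP/(_ w): (block_induced BB BC CnS).
have w_p' : w \in p' by move: (mem_last x p'); rewrite -wE inE (negbTE wx).
by rewrite B1 !inE (negbTE wx) (negbTE wu) w_p'.
Qed.

End Blocks.

Lemma nonanchor_nbr_leaf (T : finType) (e : rel T) (Q : sgraph T) v x :
  near_leaf e Q ->
  is_anchor e Q v \/ ((~ exists a, is_anchor e Q a) /\ v \in Q.1 /\ cutH e v) ->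
  x != v -> x \in Q.1 -> cutH e x ->
  forall B, neighbours e Q B -> x \in B.1 -> leaf_block e B.
Proof.
move=> [[QB _] near] Hv xv xQ xcut B QB_nbr xB.
have not_internal : ~ internal_block e B.
  move=> Bint; case: Hv => [[_ [_ _ /(_ B Bint QB_nbr)]] | [no_anchor _]].
    by move/setP/(_ x); rewrite !inE xB xQ (negbTE xv).
  case: near => [/(_ B QB_nbr) [_ Bleaf] | [a Ha]].
    by case: Bint => _; rewrite Bleaf.
  by apply: no_anchor; exists a; split; first exists B.
have [_ BB _ _] := QB_nbr; split=> //; apply/eqP; rewrite eqn_leq.
rewrite leqNgt (introN idP (fun h => not_internal (conj BB h))) /= card_gt0.
by apply/set0Pn; exists x; rewrite inE xB.
Qed.

Section NearLeafBlock.
Variables (T : finType) (e : rel T).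
Hypotheses (e_sym : symmetric e) (e_irr : irreflexive e) (H_conn : gconnected (Hgraph e))
  (H_block : block_graph e) (H_pointed : pointed e).
Variables (Q : sgraph T) (x : T).
Hypotheses (QB : is_block e Q) (HxQ : x \in Q.1) (Hxcut : cutH e x)
  (nbr_leaf : forall B, neighbours e Q B -> x \in B.1 -> leaf_block e B).

Let Q_sub : is_subgraph e Q. Proof. by case/and3P: QB.1. Qed.

Lemma Q_edgeE a b : a != b -> ([set a; b] \in Q.2) = (a \in Q.1) && (b \in Q.1).
Proof.
move=> ab; apply/idP/andP => [/(subgraph_edge_vertices Q_sub)/andP//|[aQ bQ]].
exact: complete_edge (H_block QB) aQ bQ ab.
Qed.

Lemma Q_adj a b : a \in Q.1 -> b \in Q.1 -> a != b -> e a b.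
Proof.
by move=> aQ bQ ab; apply: (subgraph_edge_adj e_sym e_irr Q_sub); rewrite Q_edgeE ?aQ.
Qed.

Lemma out_Q_nbr_unique b q1 q2 : b \notin Q.1 -> q1 \in Q.1 -> q2 \in Q.1 ->
  e b q1 -> e b q2 -> q1 = q2.
Proof.
move=> bQ q1Q q2Q eb1 eb2; apply/eqP; apply: contraT => q12.
have hub q : q \in Q.1 -> e b q -> {in b |: Q.1, forall a, a != q -> e q a}.
  move=> qQ ebq a; rewrite !inE => /predU1P[-> _|aQ aq]; first by rewrite e_sym.
  by apply: Q_adj; rewrite // eq_sym.
have DnS := induced_two_hubs_nonseparable e_sym e_irr
  (setU1r b q1Q) (setU1r b q2Q) q12 (hub _ q1Q eb1) (hub _ q2Q eb2).
move/setP/(_ b): (block_induced QB (subsetU1 _ _) DnS).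
by rewrite setU11 (negbTE bQ).
Qed.

Lemma out_Q_nbr_pendant u w : u \notin Q.1 -> e x u -> e u w -> w = x.
Proof.
move=> uQ exu euw; have xu : x != u := adj_neq e_irr exu.
have [B BB /andP[xuB _]] := nonseparable_sub_block (edge_nonseparable e_sym e_irr exu).
have xB : x \in B.1 by apply: (subsetP xuB); rewrite set21.
have uB : u \in B.1 by apply: (subsetP xuB); rewrite set22.
have QB_nbr : neighbours e Q B.
  split=> //; first by move=> QE; rewrite QE uB in uQ.
  by apply/negP => /disjointFr/(_ HxQ); rewrite xB.
have [_ Bcut] := nbr_leaf QB_nbr xB.
have [_ B2] := H_pointed (nbr_leaf QB_nbr xB).
have B1 : B.1 = [set x; u].
  by apply/esym/eqP; rewrite eqEcard cards2 xu B2 subUset !sub1set xB uB.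
have ucut : ~~ cutH e u.
  apply/negP => ucut; have : 2 <= ncutin e B; last by rewrite Bcut.
  rewrite -[2]/(true.+1) -xu -cards2; apply: subset_leq_card; apply/subsetP => a.
  by rewrite B1 !inE => /orP[]/eqP->; rewrite eqxx ?orbT.
by apply: (edge_block_pendant e_sym e_irr H_conn BB B1 _ ucut euw); rewrite e_sym.
Qed.

Lemma leaf_nbr_edge L : leaf_block e L -> neighbours e Q L -> x \in L.1 ->
  exists z, [/\ z \notin Q.1, e x z & [set x; z] \in L.2].
Proof.
move=> HL [_ LB QL _] xL; have [_ L2] := H_pointed HL.
have /cards1P[z Ez] : #|L.1 :\ x| == 1 by move: L2; rewrite (cardsD1 x) xL add1n => -[->].
have : z \in L.1 :\ x by rewrite Ez set11.
rewrite in_setD1 => /andP[zx zL].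
have L_sub : is_subgraph e L by case/and3P: LB.1.
have xzL : [set x; z] \in L.2 by apply: complete_edge (H_block LB) _ _ _; rewrite // eq_sym.
exists z; split=> //; last exact: (subgraph_edge_adj e_sym e_irr L_sub xzL).
apply/negP => zQ; apply: QL; apply: LB.2 QB.1 _.
have LQ : L.1 \subset Q.1 by rewrite -(setD1K xL) Ez subUset !sub1set HxQ.
apply/andP; split=> //; apply/subsetP => f fL.
have [a [b [eab fE]]] := EHP e f (subsetP (andP L_sub).1 _ fL).
move: fL; rewrite fE => /(subgraph_edge_vertices L_sub)/andP[aL bL].
by rewrite Q_edgeE ?(adj_neq e_irr eab) ?(subsetP LQ).
Qed.

Definition ant_vertices y := [set a | [|| a \in Q.1, e x a | e y a]].

Lemma big_ant_edgeE y a b : a != b -> ([set a; b] \in big_ant_edges e Q x y) =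
  [|| (a \in Q.1) && (b \in Q.1), (a == x) && e x b, (b == x) && e x a,
      (a == y) && e y b | (b == y) && e y a].
Proof.
move=> ab; have deltaE c : ([set a; b] \in delta e c) = e a b && ((a == c) || (b == c)).
  by rewrite in_set EH_edge // in_set2 ![c == _]eq_sym.
have sideE c : e a b && ((a == c) || (b == c)) = ((a == c) && e c b) || ((b == c) && e c a).
  by case: (a =P c) => [->|_]; case: (b =P c) => [->|_];
    rewrite /= ?orbb ?orbF ?andbT ?andbF // e_sym.
by rewrite !in_setU Q_edgeE // !deltaE !sideE !orbA.
Qed.

Section BigAntIntervals.
Local Open Scope R_scope.

Let n := INR #|T|.

Definition ant_point (a : T) : R := INR (enum_rank a) + 2.

Lemma ant_point_bounds a : 2 <= ant_point a <= n + 1.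
Proof.
have /leP/le_INR : ((enum_rank a).+1 <= #|T|)%N by apply: ltn_ord.
by rewrite S_INR -/n; have := pos_INR (enum_rank a); rewrite /ant_point; lra.
Qed.

Lemma ant_point_neq a b : a != b -> ant_point a < ant_point b \/ ant_point b < ant_point a.
Proof.
move=> ab; case: (Rtotal_order (ant_point a) (ant_point b)) => [|[pab|]]; auto.
case/eqP: ab; apply/enum_rank_inj/ord_inj/INR_eq.
by move: pab; rewrite /ant_point; lra.
Qed.

(* x and y are points at the two ends, the other vertices of Q distinct points in
   between, and the private neighbours of x (resp. y) long intervals reaching
   the position of y (resp. x) but not that of x (resp. y). *)
Definition ant_iv y a : R * R :=
  if a == x then (0, 0) else if a == y then (n + 3, n + 3)
  else if a \in Q.1 then (ant_point a, ant_point a)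
  else if e x a then (1, n + 3) else (0, n + 2).

Variant ant_vertex_spec y a : R * R -> Prop :=
  | AntX of a = x : ant_vertex_spec y a (0, 0)
  | AntY of a = y & y != x : ant_vertex_spec y a (n + 3, n + 3)
  | AntQ of a \in Q.1 & a != x & a != y : ant_vertex_spec y a (ant_point a, ant_point a)
  | AntNx of a \notin Q.1 & a != x & a != y & e x a & e y a = (y == x) :
      ant_vertex_spec y a (1, n + 3)
  | AntNy of a \notin Q.1 & a != x & a != y & ~~ e x a & e y a & y != x :
      ant_vertex_spec y a (0, n + 2).

Lemma ant_vertexP y a : y \in Q.1 -> a \in ant_vertices y -> ant_vertex_spec y a (ant_iv y a).
Proof.
move=> yQ; rewrite inE /ant_iv => a_ant.
have [->|ax] := eqVneq a x; first exact: AntX.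
have [ay|ay] := eqVneq a y; first by apply: AntY; rewrite // -ay.
have [aQ|aQ] := boolP (a \in Q.1); first exact: AntQ.
have [exa|exa] := boolP (e x a).
  apply: AntNx => //; have [->|yx] := eqVneq y x; first by rewrite exa.
  apply/negbTE/negP => eya; case/eqP: yx.
  by apply: (out_Q_nbr_unique aQ) => //; rewrite e_sym.
move: a_ant; rewrite (negbTE aQ) (negbTE exa) /= => eya.
by apply: AntNy => //; apply: contraNneq exa => <-.
Qed.

Lemma big_ant_ivP y a b : y \in Q.1 -> a \in ant_vertices y -> b \in ant_vertices y ->
  a != b -> [set a; b] \in big_ant_edges e Q x y <-> ivdisj (ant_iv y a) (ant_iv y b).
Proof.
move=> yQ a_ant b_ant; have n_ge0 : 0 <= n := pos_INR _.
move: (ant_point_bounds a) (ant_point_bounds b) (@ant_point_neq a b).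
case: (ant_vertexP yQ a_ant) => [->|-> yx|aQ ax ay|aQ ax ay exa eya|aQ ax ay exa eya yx];
case: (ant_vertexP yQ b_ant) => [->|-> yx'|bQ bx by_|bQ bx by_ exb eyb|bQ bx by_ exb eyb yx'];
move=> a_bnd b_bnd pab ab; rewrite big_ant_edgeE // /ivdisj /=.
all: repeat match goal with H : is_true (~~ _) |- _ => move/negbTE: H => H end.
(* Once every test is oriented as [_ == x], like the hypotheses, each case compares
   two explicit intervals. *)
all: rewrite ?eqxx ?(eq_sym x) ?HxQ ?yQ;
  repeat match goal with
         | H : ?L = ?R |- context[?L] => rewrite H
         | H : is_true ?L |- context[?L] => rewrite H
         end; rewrite /=.
all: first [ by split=> // _; first [left; lra | right; lra | apply: pab; rewrite ab]
           | by split=> // -[]; lra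
           | by rewrite eqxx in ab ].
Qed.

Lemma big_ant_co_interval y : y \in Q.1 ->
  co_interval_subgraph e (ant_vertices y, big_ant_edges e Q x y).
Proof.
move=> yQ; have antE : big_ant_edges e Q x y \subset EH e.
  rewrite !subUset (andP Q_sub).1.
  by apply/andP; split; apply/subsetP => f; rewrite inE => /andP[].
split.
  apply/andP; split=> //; apply/forall_inP => f f_ant.
  have [a [b [eab fE]]] := EHP e f (subsetP antE _ f_ant).
  move: f_ant; rewrite fE big_ant_edgeE ?(adj_neq e_irr eab) // => ab_ant.
  apply/subsetP => c /set2P[]->; rewrite inE;
    case/orP: ab_ant => [/andP[aQ bQ]|/or4P[] /andP[/eqP E exy]];
    by rewrite ?aQ ?bQ ?E ?HxQ ?yQ ?exy ?orbT.
exists (fun a => (ant_iv y a).1), (fun a => (ant_iv y a).2); split.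
  move=> a a_ant; have := ant_point_bounds a; have := pos_INR #|T|.
  by case: (ant_vertexP yQ a_ant) => /= *; rewrite -/n; lra.
move=> a b a_ant b_ant ab; exact: big_ant_ivP.
Qed.

End BigAntIntervals.

Section MaxCoInterval.
Variables (K : sgraph T) (l r : T -> R) (z : T).
Hypotheses (K_sub : is_subgraph e K) (K_lr : forall a, a \in K.1 -> Rle (l a) (r a))
  (K_iv : forall a b, a \in K.1 -> b \in K.1 -> a != b ->
     [set a; b] \in K.2 <-> ivdisj (l a, r a) (l b, r b))
  (zQ : z \notin Q.1) (exz : e x z) (xzK : [set x; z] \in K.2).

Let iv a := (l a, r a).
Let K_adj a b : [set a; b] \in K.2 -> e a b := subgraph_edge_adj e_sym e_irr K_sub.
Let xK : x \in K.1. Proof. by case/andP: (subgraph_edge_vertices K_sub xzK). Qed.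
Let zK : z \in K.1. Proof. by case/andP: (subgraph_edge_vertices K_sub xzK). Qed.

Lemma K_edge_disj a b : [set a; b] \in K.2 -> ivdisj (iv a) (iv b).
Proof.
move=> abK; have /andP[aK bK] := subgraph_edge_vertices K_sub abK.
exact/(K_iv aK bK (adj_neq e_irr (K_adj abK))).
Qed.

Lemma K_nonedge_meet a b : a \in K.1 -> b \in K.1 -> [set a; b] \notin K.2 ->
  ~ ivdisj (iv a) (iv b).
Proof.
move=> aK bK abK; have [<-|ab] := eqVneq a b.
  by have := K_lr aK; rewrite /ivdisj /=; lra.
by move/(K_iv aK bK ab); apply/negP.
Qed.

Lemma K_nonadj_meet a b : a \in K.1 -> b \in K.1 -> ~~ e a b -> ~ ivdisj (iv a) (iv b).
Proof. by move=> aK bK nab; apply: K_nonedge_meet => //; apply: contra nab; apply: K_adj. Qed.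

Let z_nonadj w : w != x -> ~~ e z w.
Proof. by move=> wx; apply: contraNN wx => /(out_Q_nbr_pendant zQ exz)->. Qed.

Let x_nonadj c q : c \notin Q.1 -> e c q -> q != x -> ~~ e x c.
Proof. by move=> cQ ecq; apply: contraNN => exc; rewrite (out_Q_nbr_pendant cQ exc ecq). Qed.

Lemma K_edge_meets_Q a b : [set a; b] \in K.2 -> a != x -> b != x ->
  (a \in Q.1) || (b \in Q.1).
Proof.
move=> abK ax bx; have eab := K_adj abK; have eba : e b a by rewrite e_sym.
have /andP[aK bK] := subgraph_edge_vertices K_sub abK.
apply/norP => -[aQ bQ].
apply: (ivdisj_no_induced_2K2 (K_edge_disj xzK) (K_edge_disj abK)).
- by apply: K_nonedge_meet => //; apply: contraNN (x_nonadj aQ eab bx) => /K_adj.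
- by apply: K_nonedge_meet => //; apply: contraNN (x_nonadj bQ eba ax) => /K_adj.
- exact: K_nonadj_meet (z_nonadj ax).
- exact: K_nonadj_meet (z_nonadj bx).
Qed.

Lemma K_out_edges_share_Q_end q1 c1 q2 c2 :
  [set q1; c1] \in K.2 -> [set q2; c2] \in K.2 -> q1 \in Q.1 -> q2 \in Q.1 ->
  c1 \notin Q.1 -> c2 \notin Q.1 -> q1 != x -> q2 != x -> q1 = q2.
Proof.
move=> K1 K2 q1Q q2Q c1Q c2Q q1x q2x; apply/eqP; apply: contraT => q12; exfalso.
have /andP[q1K c1K] := subgraph_edge_vertices K_sub K1.
have /andP[q2K c2K] := subgraph_edge_vertices K_sub K2.
have [e1 e2] : e c1 q1 /\ e c2 q2 by rewrite !(e_sym _ q1) !(e_sym _ q2) !K_adj.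
have outx c : c \notin Q.1 -> c != x by move=> cQ; apply: contraNneq cQ => ->.
have cross c q q' : c \notin Q.1 -> e c q' -> q' \in Q.1 -> q != q' -> q \in Q.1 -> ~~ e q c.
  move=> cQ ecq' q'Q qq' qQ; apply/negP; rewrite e_sym => ecq.
  by case/eqP: qq'; apply: (out_Q_nbr_unique cQ).
apply: (ivdisj_crossed_pairs (K_edge_disj xzK) (K_edge_disj K1) (K_edge_disj K2)).
all: apply: K_nonadj_meet => //.
- exact: x_nonadj e1 q1x.
- exact: x_nonadj e2 q2x.
- exact/z_nonadj/outx.
- exact/z_nonadj/outx.
- exact: z_nonadj.
- exact: z_nonadj.
- exact: (cross _ _ q2).
- by apply: (cross _ _ q1); rewrite // eq_sym.
Qed.

Lemma K_sub_big_ant : exists2 y, y \in Q.1 & K.2 \subset big_ant_edges e Q x y.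
Proof.
have [y yQ y_uniq] : exists2 y, y \in Q.1 & forall q c, [set q; c] \in K.2 ->
    q \in Q.1 -> c \notin Q.1 -> q != x -> q = y.
  case: (pickP [pred q | [&& q \in Q.1, q != x &
      [exists c, (c \notin Q.1) && ([set q; c] \in K.2)]]]) => [y|none].
    case/and3P=> yQ yx /existsP[c /andP[cQ ycK]]; exists y => // q c' qcK qQ c'Q qx.
    exact: K_out_edges_share_Q_end qcK ycK qQ yQ c'Q cQ qx yx.
  exists x => // q c qcK qQ cQ qx; move: (none q) => /=.
  by rewrite qQ qx /=; case/existsP; exists c; rewrite cQ.
exists y => //; apply/subsetP => f fK.
have [a [b [eab fE]]] := EHP e f (subsetP (andP K_sub).1 _ fK).
rewrite fE in fK *; rewrite big_ant_edgeE ?(adj_neq e_irr eab) //.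
have [<-|ax] := eqVneq a x; first by rewrite eab /= orbT.
have [<-|bx] := eqVneq b x; first by rewrite e_sym eab /= !orbT.
have [aQ|aQ] := boolP (a \in Q.1); have [bQ|bQ] := boolP (b \in Q.1) => //=.
- by rewrite -(y_uniq _ _ fK aQ bQ ax) eqxx eab /= ?orbT.
- by rewrite setUC in fK; rewrite -(y_uniq _ _ fK bQ aQ bx) eqxx e_sym eab /= ?orbT.
- by move: (K_edge_meets_Q fK ax bx); rewrite (negbTE aQ) (negbTE bQ).
Qed.

End MaxCoInterval.

Lemma max_co_interval_big_ant L K : leaf_block e L -> neighbours e Q L -> x \in L.1 ->
  maximal_co_interval e K -> L.2 \subset K.2 ->
  exists2 y, y \in Q.1 & K.2 = big_ant_edges e Q x y.
Proof.
move=> HL HLQ xL [[K_sub [l [r [K_lr K_iv]]]] Kmax] LK.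
have [z [zQ exz xzL]] := leaf_nbr_edge HL HLQ xL.
have [y yQ K_ant] := K_sub_big_ant K_sub K_lr K_iv zQ exz (subsetP LK _ xzL).
exists y => //; apply/eqP; rewrite eqEproper K_ant /=; apply/negP => K_ant_proper.
apply: Kmax; exists (ant_vertices y, big_ant_edges e Q x y).
by split; first exact: big_ant_co_interval.
Qed.

End NearLeafBlock.

Unset Implicit Arguments.

Theorem mainTheorem9 (T : finType) (e : rel T)
  (e_sym : symmetric e) (e_irr : irreflexive e)
  (H_conn : gconnected (Hgraph e))
  (H_block : block_graph e) (H_pointed : pointed e)
  (Q : sgraph T) (HQ : near_leaf e Q)
  (v : T)
  (Hv : is_anchor e Q v \/
        ((~ exists a, is_anchor e Q a) /\ v \in Q.1 /\ cutH e v))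
  (x : T) (Hxv : x != v) (HxQ : x \in Q.1) (Hxcut : cutH e x)
  (L : sgraph T) (HL : leaf_block e L) (HLQ : neighbours e Q L) (HxL : x \in L.1) :
  forall K : sgraph T, maximal_co_interval e K -> L.2 \subset K.2 ->
    exists2 y, y \in Q.1 & K.2 = big_ant_edges e Q x y.
Proof.
have QB : is_block e Q := HQ.1.1.
have nbr_leaf := nonanchor_nbr_leaf HQ Hv Hxv HxQ Hxcut.
move=> K HK HLK.
exact: (max_co_interval_big_ant e_sym e_irr H_conn H_block H_pointed QB HxQ Hxcut
          nbr_leaf HL HLQ HxL HK HLK).
Qed.
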